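(* Let $\Omega=\{(x,y,z)\in\mathbb{R}^3: z<xy^2\}$. Then $\Omega$ is a $C^\infty$ domain, but $\Omega$ has no uniformly $C^2$ defining function.
   Context: A $C^m$ defining function for an open set $\Omega\subset\mathbb{R}^n$ is a real-valued $C^m$ function $\rho$ on an open neighborhood $U$ of $\partial\Omega$ with $\{x\in U:\rho<0\}=\Omega\cap U$ and $\nabla\rho\neq0$ on $\partial\Omega$; $\Omega$ is a $C^\infty$ domain if it has a $C^\infty$ defining function. A defining function is uniformly $C^m$ if $\operatorname{dist}(\partial\Omega,\partial U)>0$, $\sup_{U}\sum_{|\alpha|\le m}|\partial^\alpha\rho|<\infty$, and $\inf_U|\nabla\rho|>0$. *)

From Stdlib Require Import Reals Lra.
Open Scope R_scope.

Definition pt : Type := (R * R * R)%type.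

Definition dist3 (p q : pt) : R :=
  let '(x, y, z) := p in let '(x', y', z') := q in
  sqrt ((x - x')^2 + (y - y')^2 + (z - z')^2).

Definition is_open (U : pt -> Prop) : Prop :=
  forall p, U p -> exists r, 0 < r /\ forall q, dist3 p q < r -> U q.

Definition bdry (S : pt -> Prop) (p : pt) : Prop :=
  forall r, 0 < r ->
    (exists q, dist3 p q < r /\ S q) /\ (exists q, dist3 p q < r /\ ~ S q).

Definition shift (i : nat) (p : pt) (t : R) : pt :=
  let '(x, y, z) := p in
  match i with
  | 0%nat => (x + t, y, z)
  | 1%nat => (x, y + t, z)
  | _ => (x, y, z + t)
  end.

Definition has_partial (i : nat) (f : pt -> R) (p : pt) (d : R) : Prop :=
  derivable_pt_lim (fun t => f (shift i p t)) 0 d.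

Definition cont_on (U : pt -> Prop) (f : pt -> R) : Prop :=
  forall p, U p -> forall eps, 0 < eps ->
    exists del, 0 < del /\ forall q, dist3 p q < del -> Rabs (f q - f p) < eps.

Fixpoint Cm (m : nat) (U : pt -> Prop) (f : pt -> R) : Prop :=
  cont_on U f /\
  match m with
  | 0%nat => True
  | S k => forall i, (i < 3)%nat ->
      exists g : pt -> R, (forall p, U p -> has_partial i f p (g p)) /\ Cm k U g
  end.

Definition Cinf (U : pt -> Prop) (f : pt -> R) : Prop := forall m, Cm m U f.

Fixpoint bdd_Cm (m : nat) (U : pt -> Prop) (f : pt -> R) : Prop :=
  cont_on U f /\ (exists M, forall p, U p -> Rabs (f p) <= M) /\
  match m with
  | 0%nat => True
  | S k => forall i, (i < 3)%nat ->
      exists g : pt -> R, (forall p, U p -> has_partial i f p (g p)) /\ bdd_Cm k U g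
  end.

Definition defining_fun (m : nat) (Omega U : pt -> Prop) (rho : pt -> R) : Prop :=
  is_open U /\
  (forall p, bdry Omega p -> U p) /\
  (forall p, U p -> (rho p < 0 <-> Omega p)) /\
  Cm m U rho /\
  (forall p, bdry Omega p ->
     exists i d, (i < 3)%nat /\ has_partial i rho p d /\ d <> 0).

Definition is_Cinf_domain (Omega : pt -> Prop) : Prop :=
  exists (U : pt -> Prop) (rho : pt -> R),
    defining_fun 1 Omega U rho /\ Cinf U rho.

Definition uniformly_Cm_defining_fun (m : nat) (Omega U : pt -> Prop) (rho : pt -> R) : Prop :=
  defining_fun m Omega U rho /\
  (exists del, 0 < del /\ forall p q, bdry Omega p -> bdry U q -> del <= dist3 p q) /\
  bdd_Cm m U rho /\
  (exists c, 0 < c /\ forall p, U p -> forall d0 d1 d2,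
     has_partial 0 rho p d0 -> has_partial 1 rho p d1 -> has_partial 2 rho p d2 ->
     c <= sqrt (d0^2 + d1^2 + d2^2)).

Definition Omega7 (p : pt) : Prop := let '(x, y, z) := p in z < x * y^2.

(* Smoothness: rho = z - x y^2 is a global defining function.  It lies in the
   seven-dimensional space spanned by 1, x, y, z, xy, y^2, xy^2, which is
   stable under the three partial derivatives, so every element of that space
   is C^m for every m (continuity coming from Coquelicot's continuity of sums
   and products).

   Non-existence: let rho be a defining function on U whose second partials
   are bounded by M and whose gradient has norm at least c > 0.  On the ridge
   (a, 0, 0), a > 0, the function rho is maximal (it is <= 0 on the closure of
   Omega7 and vanishes on the surface z = x y^2), so rho_x = rho_y = 0 there and
   |rho_z(a,0,0)| >= c.  Along the y-axis, Taylor's estimate gives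
   |rho(a,y,0)| <= M y^2, while the mean value theorem in z, between (a,y,0) and
   the surface point (a,y,a y^2), gives |rho(a,y,0)| ~ a y^2 |rho_z(a,0,0)|.
   Letting y -> 0 yields a c <= 2M for every a > 0, which is absurd. *)

From Stdlib Require Import Reals Lra Lia.
From Coquelicot Require Import Coquelicot.
Open Scope R_scope.

Lemma deriv_zero_at_local_max (F : R -> R) (l r : R) :
  0 < r -> derivable_pt_lim F 0 l ->
  (forall t, -r < t < r -> F t <= F 0) -> l = 0.
Proof.
  intros Hr Hl Hmax.
  exact (deriv_maximum F (-r) r 0 (exist _ l Hl) ltac:(lra) Hr
           (fun t H1 H2 => Hmax t (conj H1 H2))).
Qed.

Lemma mvt_bound (F F' : R -> R) (M a b : R) : a <= b ->
  (forall t, a <= t <= b -> derivable_pt_lim F t (F' t)) ->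
  (forall t, a <= t <= b -> Rabs (F' t) <= M) ->
  Rabs (F b - F a) <= M * (b - a).
Proof.
  intros Hab HD HM.
  destruct (MVT_abs F F' a b) as [t [Ht Hint]].
  { rewrite Rmin_left, Rmax_right by lra. exact HD. }
  rewrite Rmin_left, Rmax_right in Hint by lra.
  rewrite Ht, (Rabs_right (b - a)) by lra.
  apply Rmult_le_compat_r; [lra | exact (HM t Hint)].
Qed.

Lemma taylor2_bound (F F1 F2 : R -> R) (M y : R) : 0 <= y ->
  F 0 = 0 -> F1 0 = 0 ->
  (forall t, 0 <= t <= y -> derivable_pt_lim F t (F1 t)) ->
  (forall t, 0 <= t <= y -> derivable_pt_lim F1 t (F2 t)) ->
  (forall t, 0 <= t <= y -> Rabs (F2 t) <= M) ->
  Rabs (F y) <= M * y ^ 2.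
Proof.
  intros Hy F0 F10 HF HF1 HF2.
  assert (HM : 0 <= M) by (specialize (HF2 0 ltac:(lra)); pose proof (Rabs_pos (F2 0)); lra).
  assert (Hslope : forall t, 0 <= t <= y -> Rabs (F1 t) <= M * y).
  { intros t Ht.
    assert (Hb := mvt_bound F1 F2 M 0 t ltac:(lra)
                    (fun u Hu => HF1 u ltac:(lra)) (fun u Hu => HF2 u ltac:(lra))).
    rewrite F10, !Rminus_0_r in Hb.
    assert (M * t <= M * y) by (apply Rmult_le_compat_l; lra). lra. }
  assert (Hb := mvt_bound F F1 (M * y) 0 y Hy HF Hslope).
  rewrite F0, !Rminus_0_r in Hb. lra.
Qed.

(* Derivatives are translation invariant; this turns a partial derivative,
   i.e. a derivative at 0 along a shifted line, into an ordinary one. *)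
Lemma derivable_pt_lim_translate (G : R -> R) (t0 d : R) :
  derivable_pt_lim (fun t => G (t0 + t)) 0 d -> derivable_pt_lim G t0 d.
Proof.
  intros H eps Heps. destruct (H eps Heps) as [del Hdel]. exists del.
  intros h Hh Hlt. specialize (Hdel h Hh Hlt).
  rewrite Rplus_0_l, Rplus_0_r in Hdel. exact Hdel.
Qed.

Lemma partial_y_line (f : pt -> R) (x y z d : R) :
  has_partial 1 f (x, y, z) d -> derivable_pt_lim (fun u => f (x, u, z)) y d.
Proof. exact (derivable_pt_lim_translate (fun u => f (x, u, z)) y d). Qed.

Lemma partial_z_line (f : pt -> R) (x y z d : R) :
  has_partial 2 f (x, y, z) d -> derivable_pt_lim (fun u => f (x, y, u)) z d.
Proof. exact (derivable_pt_lim_translate (fun u => f (x, y, u)) z d). Qed.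

Lemma Rabs_le_norm3 (u v w : R) : Rabs u <= sqrt (u ^ 2 + v ^ 2 + w ^ 2).
Proof. rewrite <- sqrt_Rsqr_abs. apply sqrt_le_1_alt. unfold Rsqr; simpl; nra. Qed.

(* Euclidean balls lie in the sup-norm balls of Coquelicot's product space. *)
Lemma dist3_ball (p q : pt) (r : R) : dist3 p q < r -> ball p r q.
Proof.
  destruct p as [[x y] z], q as [[x' y'] z']; unfold dist3; intros H.
  assert (Hx := Rabs_le_norm3 (x - x') (y - y') (z - z')).
  assert (Hy := Rabs_le_norm3 (y - y') (x - x') (z - z')).
  assert (Hz := Rabs_le_norm3 (z - z') (x - x') (y - y')).
  replace ((y - y') ^ 2 + (x - x') ^ 2 + (z - z') ^ 2)
    with ((x - x') ^ 2 + (y - y') ^ 2 + (z - z') ^ 2) in Hy by ring.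
  replace ((z - z') ^ 2 + (x - x') ^ 2 + (y - y') ^ 2)
    with ((x - x') ^ 2 + (y - y') ^ 2 + (z - z') ^ 2) in Hz by ring.
  repeat split.
  - change (Rabs (x' - x) < r); rewrite Rabs_minus_sym; lra.
  - change (Rabs (y' - y) < r); rewrite Rabs_minus_sym; lra.
  - change (Rabs (z' - z) < r); rewrite Rabs_minus_sym; lra.
Qed.

Lemma dist3_vertical (x y z s : R) : dist3 (x, y, z) (x, y, z - s) = Rabs s.
Proof. unfold dist3. rewrite <- sqrt_Rsqr_abs. f_equal. unfold Rsqr. ring. Qed.

Lemma dist3_yz_le (x y z y' z' : R) :
  dist3 (x, y, z) (x, y', z') <= Rabs (y' - y) + Rabs (z' - z).
Proof.
  unfold dist3.
  pose proof (Rabs_pos (y' - y)); pose proof (Rabs_pos (z' - z)).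
  rewrite <- (sqrt_pow2 (Rabs (y' - y) + Rabs (z' - z))) by lra.
  apply sqrt_le_1_alt.
  rewrite <- (pow2_abs (y - y')), <- (pow2_abs (z - z')),
    (Rabs_minus_sym y), (Rabs_minus_sym z).
  nra.
Qed.

Lemma cont_on_of_continuous (U : pt -> Prop) (f : pt -> R) :
  (forall p, U p -> continuous f p) -> cont_on U f.
Proof.
  intros Hf p Hp eps Heps.
  destruct (proj1 (filterlim_locally f (f p)) (Hf p Hp) (mkposreal eps Heps))
    as [del Hdel].
  exists del; split; [apply cond_pos |].
  intros q Hq. exact (Hdel q (dist3_ball p q del Hq)).
Qed.

Definition px (p : pt) : R := fst (fst p).
Definition py (p : pt) : R := snd (fst p).
Definition pz (p : pt) : R := snd p.

Lemma continuous_px (p : pt) : continuous px p.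
Proof.
  destruct p as [[x y] z].
  apply (continuous_comp fst fst); [apply continuous_fst | apply continuous_fst].
Qed.

Lemma continuous_py (p : pt) : continuous py p.
Proof.
  destruct p as [[x y] z].
  apply (continuous_comp fst snd); [apply continuous_fst | apply continuous_snd].
Qed.

Lemma continuous_pz (p : pt) : continuous pz p.
Proof. destruct p as [[x y] z]. apply continuous_snd. Qed.

Lemma continuous_Rplus (f g : pt -> R) (p : pt) :
  continuous f p -> continuous g p -> continuous (fun q => f q + g q) p.
Proof. exact (continuous_plus (V := R_NormedModule) f g p). Qed.

Lemma continuous_Rmult (f g : pt -> R) (p : pt) :
  continuous f p -> continuous g p -> continuous (fun q => f q * g q) p.
Proof. exact (continuous_mult (K := R_AbsRing) f g p). Qed.

(* The span of 1, x, y, z, xy, y^2, xy^2: it contains z - x y^2 and is stable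
   under partial differentiation. *)
Definition poly7 (a b c d e g h : R) (q : pt) : R :=
  a + b * px q + c * py q + d * pz q + e * px q * py q + g * py q * py q
  + h * px q * py q * py q.

Lemma continuous_poly7 (a b c d e g h : R) (p : pt) :
  continuous (poly7 a b c d e g h) p.
Proof.
  unfold poly7.
  repeat lazymatch goal with
  | |- continuous (fun q => _ + _) _ => apply continuous_Rplus
  | |- continuous (fun q => _ * _) _ => apply continuous_Rmult
  | |- continuous px _ => apply continuous_px
  | |- continuous py _ => apply continuous_py
  | |- continuous pz _ => apply continuous_pz
  | |- continuous (fun q => _) _ => apply continuous_const
  end.
Qed.

Lemma poly7_dx (a b c d e g h : R) (p : pt) :
  has_partial 0 (poly7 a b c d e g h) p (poly7 b 0 e 0 0 h 0 p).
Proof.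
  destruct p as [[x y] z]. apply is_derive_Reals.
  unfold poly7, px, py, pz; simpl. auto_derive; [exact I | ring].
Qed.

Lemma poly7_dy (a b c d e g h : R) (p : pt) :
  has_partial 1 (poly7 a b c d e g h) p (poly7 c e (2 * g) 0 (2 * h) 0 0 p).
Proof.
  destruct p as [[x y] z]. apply is_derive_Reals.
  unfold poly7, px, py, pz; simpl. auto_derive; [exact I | ring].
Qed.

Lemma poly7_dz (a b c d e g h : R) (p : pt) :
  has_partial 2 (poly7 a b c d e g h) p (poly7 d 0 0 0 0 0 0 p).
Proof.
  destruct p as [[x y] z]. apply is_derive_Reals.
  unfold poly7, px, py, pz; simpl. auto_derive; [exact I | ring].
Qed.

Lemma poly7_Cm (m : nat) : forall a b c d e g h,
  Cm m (fun _ => True) (poly7 a b c d e g h).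
Proof.
  induction m as [| m IH]; intros; simpl; split;
    try (apply cont_on_of_continuous; intros; apply continuous_poly7); [exact I |].
  intros [| [| [| i]]] Hi; [| | | lia].
  - exists (poly7 b 0 e 0 0 h 0); split; [intros; apply poly7_dx | apply IH].
  - exists (poly7 c e (2 * g) 0 (2 * h) 0 0); split; [intros; apply poly7_dy | apply IH].
  - exists (poly7 d 0 0 0 0 0 0); split; [intros; apply poly7_dz | apply IH].
Qed.

Lemma Omega7_Cinf_domain : is_Cinf_domain Omega7.
Proof.
  exists (fun _ => True), (poly7 0 0 0 1 0 0 (-1)).
  split; [split; [| split; [| split; [| split]]] |].
  - intros p _. exists 1. split; [lra | auto].
  - auto.
  - intros [[x y] z] _. unfold poly7, px, py, pz, Omega7; simpl. split; intros; nra.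
  - apply poly7_Cm.
  - intros p _. exists 2%nat, (poly7 1 0 0 0 0 0 0 p).
    split; [lia | split; [apply poly7_dz | unfold poly7; lra]].
  - intros m. apply poly7_Cm.
Qed.

Lemma surface_in_bdry (x y z : R) : z = x * y ^ 2 -> bdry Omega7 (x, y, z).
Proof.
  intros Hz r Hr. split.
  - exists (x, y, z - r / 2). rewrite dist3_vertical, Rabs_right by lra.
    split; [lra |]. unfold Omega7. lra.
  - exists (x, y, z - - (r / 2)). rewrite dist3_vertical, Rabs_Ropp, Rabs_right by lra.
    split; [lra |]. unfold Omega7. lra.
Qed.

Section NoUniformC2.

Variables (U : pt -> Prop) (rho : pt -> R).
Hypothesis U_open : is_open U.
Hypothesis U_surface : forall x y z, z = x * y ^ 2 -> U (x, y, z).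
Hypothesis rho_sign : forall p, U p -> (rho p < 0 <-> Omega7 p).
Hypothesis rho_cont : cont_on U rho.

(* rho vanishes on the surface: it is >= 0 there since the surface misses
   Omega7, and <= 0 by continuity since points just below lie in Omega7. *)
Lemma rho_surface (x y z : R) : z = x * y ^ 2 -> rho (x, y, z) = 0.
Proof.
  intros Hz. assert (Hp : U (x, y, z)) by (apply U_surface; exact Hz).
  destruct (Rtotal_order (rho (x, y, z)) 0) as [Hneg | [Hzero | Hpos]]; auto.
  - apply (rho_sign _ Hp) in Hneg. unfold Omega7 in Hneg. lra.
  - exfalso.
    destruct (U_open _ Hp) as [r [Hr Hball]].
    destruct (rho_cont _ Hp (rho (x, y, z)) Hpos) as [del [Hdel Hnear]].
    set (s := Rmin r del / 2).
    assert (Hs : 0 < s /\ s < r /\ s < del)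
      by (unfold s; pose proof (Rmin_l r del); pose proof (Rmin_r r del);
          pose proof (Rmin_pos r del Hr Hdel); lra).
    assert (Hd : dist3 (x, y, z) (x, y, z - s) = s)
      by (rewrite dist3_vertical, Rabs_right; lra).
    assert (Hbelow : rho (x, y, z - s) < 0)
      by (apply (rho_sign _ (Hball (x, y, z - s) ltac:(lra))); unfold Omega7; lra).
    specialize (Hnear (x, y, z - s) ltac:(lra)).
    apply Rabs_def2 in Hnear. lra.
Qed.

Lemma rho_nonpos (x y z : R) : U (x, y, z) -> z <= x * y ^ 2 -> rho (x, y, z) <= 0.
Proof.
  intros Hp [Hlt | Heq].
  - left. apply (rho_sign _ Hp). exact Hlt.
  - right. apply rho_surface. exact Heq.
Qed.

Lemma ridge_neighbourhood (a : R) :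
  exists r, 0 < r /\ forall t s, Rabs t + Rabs s < r -> U (a, t, s).
Proof.
  destruct (U_open (a, 0, 0)) as [r [Hr Hball]]; [apply U_surface; ring |].
  exists r. split; [exact Hr |]. intros t s Hts. apply Hball.
  eapply Rle_lt_trans; [apply dist3_yz_le |]. rewrite !Rminus_0_r. exact Hts.
Qed.

Variables (g0 g1 g2 g11 g21 g22 : pt -> R) (M c : R).
Hypothesis rho_dx : forall p, U p -> has_partial 0 rho p (g0 p).
Hypothesis rho_dy : forall p, U p -> has_partial 1 rho p (g1 p).
Hypothesis rho_dz : forall p, U p -> has_partial 2 rho p (g2 p).
Hypothesis g1_dy : forall p, U p -> has_partial 1 g1 p (g11 p).
Hypothesis g2_dy : forall p, U p -> has_partial 1 g2 p (g21 p).
Hypothesis g2_dz : forall p, U p -> has_partial 2 g2 p (g22 p).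
Hypothesis g11_bound : forall p, U p -> Rabs (g11 p) <= M.
Hypothesis g21_bound : forall p, U p -> Rabs (g21 p) <= M.
Hypothesis g22_bound : forall p, U p -> Rabs (g22 p) <= M.
Hypothesis c_pos : 0 < c.
Hypothesis grad_lower : forall p, U p -> forall d0 d1 d2,
  has_partial 0 rho p d0 -> has_partial 1 rho p d1 -> has_partial 2 rho p d2 ->
  c <= sqrt (d0 ^ 2 + d1 ^ 2 + d2 ^ 2).

(* On the ridge, rho attains a local maximum 0 along the x- and y-directions,
   so the horizontal part of the gradient vanishes there. *)
Lemma ridge_dx (a : R) : g0 (a, 0, 0) = 0.
Proof.
  assert (Hp : U (a, 0, 0)) by (apply U_surface; ring).
  apply (deriv_zero_at_local_max _ _ 1 Rlt_0_1 (rho_dx _ Hp)).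
  intros t _; simpl. rewrite !rho_surface by ring. lra.
Qed.

Lemma ridge_dy (a : R) : 0 <= a -> g1 (a, 0, 0) = 0.
Proof.
  intros Ha.
  assert (Hp : U (a, 0, 0)) by (apply U_surface; ring).
  destruct (ridge_neighbourhood a) as [r [Hr HU]].
  apply (deriv_zero_at_local_max _ _ r Hr (rho_dy _ Hp)).
  intros t Ht; simpl. rewrite !Rplus_0_l, (rho_surface a 0 0) by ring.
  apply rho_nonpos.
  - apply HU. rewrite Rabs_R0, Rplus_0_r. apply Rabs_def1; lra.
  - nra.
Qed.

Lemma ridge_dz (a : R) : 0 <= a -> c <= Rabs (g2 (a, 0, 0)).
Proof.
  intros Ha.
  assert (Hp : U (a, 0, 0)) by (apply U_surface; ring).
  assert (Hc := grad_lower _ Hp _ _ _ (rho_dx _ Hp) (rho_dy _ Hp) (rho_dz _ Hp)).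
  rewrite ridge_dx, (ridge_dy a Ha) in Hc.
  rewrite <- sqrt_Rsqr_abs. replace (Rsqr (g2 (a, 0, 0))) with
    (0 ^ 2 + 0 ^ 2 + g2 (a, 0, 0) ^ 2) by (unfold Rsqr; ring).
  exact Hc.
Qed.

(* The bound M is nonnegative, as U is nonempty. *)
Lemma M_nonneg : 0 <= M.
Proof.
  assert (Hp : U (0, 0, 0)) by (apply U_surface; ring).
  pose proof (Rabs_pos (g11 (0, 0, 0))). pose proof (g11_bound _ Hp). lra.
Qed.

(* On the segment from (a,y,0) up to the
   surface point (a,y,a y^2), rho grows by |rho(a,y,0)| ~ a y^2 |rho_z(a,0,0)|,
   whereas Taylor's estimate in y bounds |rho(a,y,0)| by M y^2. *)
Lemma ridge_estimate (a y : R) : 0 < a -> 0 < y ->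
  (forall t s, 0 <= t <= y -> 0 <= s <= a * y ^ 2 -> U (a, t, s)) ->
  a * (Rabs (g2 (a, 0, 0)) - M * (y + a * y ^ 2)) <= M.
Proof.
  intros Ha Hy Hbox.
  assert (Hay : 0 < a * y ^ 2) by (apply Rmult_lt_0_compat; [lra | apply pow_lt; lra]).
  pose proof M_nonneg as HM.
  assert (Htaylor : Rabs (rho (a, y, 0)) <= M * y ^ 2).
  { apply (taylor2_bound (fun t => rho (a, t, 0)) (fun t => g1 (a, t, 0))
             (fun t => g11 (a, t, 0)) M y); [lra | | | | |].
    - apply rho_surface. ring.
    - apply ridge_dy. lra.
    - intros t Ht. apply partial_y_line, rho_dy, Hbox; lra.
    - intros t Ht. apply partial_y_line, g1_dy, Hbox; lra.
    - intros t Ht. apply g11_bound, Hbox; lra. }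
  destruct (MVT_cor2 (fun u => rho (a, y, u)) (fun u => g2 (a, y, u)) 0 (a * y ^ 2) Hay)
    as [xi [Hmvt Hxi]].
  { intros u Hu. apply partial_z_line, rho_dz, Hbox; lra. }
  rewrite (rho_surface a y (a * y ^ 2)), Rminus_0_r in Hmvt by ring.
  assert (Hvar : Rabs (g2 (a, y, xi) - g2 (a, 0, 0)) <= M * (y + a * y ^ 2)).
  { assert (Hdy : Rabs (g2 (a, y, xi) - g2 (a, 0, xi)) <= M * (y - 0)).
    { apply (mvt_bound (fun u => g2 (a, u, xi)) (fun u => g21 (a, u, xi))); [lra | |].
      - intros u Hu. apply partial_y_line, g2_dy, Hbox; lra.
      - intros u Hu. apply g21_bound, Hbox; lra. }
    assert (Hdz : Rabs (g2 (a, 0, xi) - g2 (a, 0, 0)) <= M * (xi - 0)).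
    { apply (mvt_bound (fun u => g2 (a, 0, u)) (fun u => g22 (a, 0, u))); [lra | |].
      - intros u Hu. apply partial_z_line, g2_dz, Hbox; lra.
      - intros u Hu. apply g22_bound, Hbox; lra. }
    assert (M * xi <= M * (a * y ^ 2)) by (apply Rmult_le_compat_l; lra).
    replace (g2 (a, y, xi) - g2 (a, 0, 0))
      with ((g2 (a, y, xi) - g2 (a, 0, xi)) + (g2 (a, 0, xi) - g2 (a, 0, 0))) by ring.
    eapply Rle_trans; [apply Rabs_triang | lra]. }
  assert (Hlower : Rabs (g2 (a, 0, 0)) - M * (y + a * y ^ 2) <= Rabs (g2 (a, y, xi))).
  { pose proof (Rabs_triang_inv (g2 (a, 0, 0)) (g2 (a, y, xi))).
    rewrite Rabs_minus_sym in Hvar. lra. }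
  assert (Hrho : Rabs (rho (a, y, 0)) = a * y ^ 2 * Rabs (g2 (a, y, xi))).
  { replace (rho (a, y, 0)) with (- (g2 (a, y, xi) * (a * y ^ 2))) by lra.
    rewrite Rabs_Ropp, Rabs_mult, (Rabs_right (a * y ^ 2)) by lra. ring. }
  apply (Rmult_le_reg_r (y ^ 2)); [apply pow_lt; lra |].
  assert (a * y ^ 2 * (Rabs (g2 (a, 0, 0)) - M * (y + a * y ^ 2))
          <= a * y ^ 2 * Rabs (g2 (a, y, xi))) by (apply Rmult_le_compat_l; lra).
  lra.
Qed.

(* Letting y -> 0 in the key estimate: the ridge forces a c <= 2 M. *)
Lemma ridge_growth (a : R) : 0 < a -> a * c <= 2 * M.
Proof.
  intros Ha.
  destruct (ridge_neighbourhood a) as [r [Hr HU]].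
  pose proof M_nonneg as HM.
  set (k := 1 + a).
  assert (Hk : 0 < k) by (unfold k; lra).
  set (y := Rmin 1 (Rmin (r / (2 * k)) (c / (2 * (M + 1) * k)))).
  assert (Hy0 : 0 < y).
  { unfold y. repeat apply Rmin_pos; try lra; apply Rdiv_lt_0_compat; nra. }
  assert (Hy1 : y <= 1) by apply Rmin_l.
  assert (Hyr : y * k <= r / 2).
  { replace (r / 2) with (r / (2 * k) * k) by (field; lra).
    apply Rmult_le_compat_r; [lra |].
    eapply Rle_trans; [apply Rmin_r | apply Rmin_l]. }
  assert (Hyc : y * k * (M + 1) <= c / 2).
  { replace (c / 2) with (c / (2 * (M + 1) * k) * k * (M + 1)) by (field; lra).
    apply Rmult_le_compat_r; [lra |]. apply Rmult_le_compat_r; [lra |].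
    eapply Rle_trans; [apply Rmin_r | apply Rmin_r]. }
  assert (Hy2 : y ^ 2 <= y) by (simpl; nra).
  assert (Hsmall : M * (y + a * y ^ 2) <= c / 2).
  { assert (y + a * y ^ 2 <= y * k) by (unfold k; nra). nra. }
  assert (Hest := ridge_estimate a y Ha Hy0).
  assert (Hc := ridge_dz a ltac:(lra)).
  assert (a * (c - c / 2) <= M); [| lra].
  eapply Rle_trans; [| apply Hest].
  - apply Rmult_le_compat_l; lra.
  - intros t s Ht Hs. apply HU. rewrite !Rabs_right by lra. unfold k in Hyr. nra.
Qed.

Lemma uniform_C2_bounds_absurd : False.
Proof.
  pose proof M_nonneg as HM.
  set (a := 2 * M / c + 1).
  assert (Ha : 0 < a) by (unfold a; assert (0 <= 2 * M / c) by
    (apply Rmult_le_pos; [lra | left; apply Rinv_0_lt_compat; lra]); lra).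
  assert (Hac : a * c = 2 * M + c) by (unfold a; field; lra).
  pose proof (ridge_growth a Ha). lra.
Qed.

End NoUniformC2.

(* Unpack a uniformly C^2 defining function into the data of the section;
   one common bound M serves for the three second derivatives used. *)
Lemma no_uniformly_C2_defining_function :
  ~ (exists (U : pt -> Prop) (rho : pt -> R), uniformly_Cm_defining_fun 2 Omega7 U rho).
Proof.
  intros [U [rho [[HUo [HbdryU [Hsign _]]] [_ [Hbdd [c [Hc Hgrad]]]]]]].
  destruct Hbdd as [Hcont [_ Hd]].
  destruct (Hd 0%nat) as [g0 [Hg0 _]]; [lia |].
  destruct (Hd 1%nat) as [g1 [Hg1 [_ [_ Hd1]]]]; [lia |].
  destruct (Hd 2%nat) as [g2 [Hg2 [_ [_ Hd2]]]]; [lia |].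
  destruct (Hd1 1%nat) as [g11 [Hg11 [_ [[M11 HM11] _]]]]; [lia |].
  destruct (Hd2 1%nat) as [g21 [Hg21 [_ [[M21 HM21] _]]]]; [lia |].
  destruct (Hd2 2%nat) as [g22 [Hg22 [_ [[M22 HM22] _]]]]; [lia |].
  pose proof (Rmax_l M11 (Rmax M21 M22)); pose proof (Rmax_r M11 (Rmax M21 M22)).
  pose proof (Rmax_l M21 M22); pose proof (Rmax_r M21 M22).
  set (M := Rmax M11 (Rmax M21 M22)) in *.
  apply (uniform_C2_bounds_absurd U rho HUo
           (fun x y z Hz => HbdryU _ (surface_in_bdry x y z Hz)) Hsign Hcont
           g0 g1 g2 g11 g21 g22 M c Hg0 Hg1 Hg2 Hg11 Hg21 Hg22);
    [intros p Hp; specialize (HM11 p Hp) | intros p Hp; specialize (HM21 p Hp)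
    | intros p Hp; specialize (HM22 p Hp) | exact Hc | exact Hgrad]; lra.
Qed.

Theorem mainTheorem7 :
  is_Cinf_domain Omega7 /\
  ~ (exists (U : pt -> Prop) (rho : pt -> R), uniformly_Cm_defining_fun 2 Omega7 U rho).
Proof. exact (conj Omega7_Cinf_domain no_uniformly_C2_defining_function). Qed.
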